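(* Let $m\ge 1$ and $n\ge 2$ be integers. For every $\mathbf a\in mB^n$, $$f_m(n,2,\mathbf a)=mn+m.$$
   Context: $mB^n=\{0,1,\ldots,m\}^n\subseteq\mathbb{R}^n$. A family of affine hyperplanes in $\mathbb{R}^n$ is a finite multiset, and a point is covered $j$ times if exactly $j$ members of the multiset contain it. For $\mathbf a\in mB^n$ and a positive integer $k$, $f_m(n,k,\mathbf a)$ denotes the minimum size of a family of affine hyperplanes such that every point of $mB^n\setminus\{\mathbf a\}$ is covered at least $k$ times and $\mathbf a$ lies on no member of the family. *)

From HB Require Import structures.
From mathcomp Require Import all_boot all_order all_algebra.
From mathcomp Require Import Rstruct.
From Stdlib Require Import Rdefinitions.
Set Implicit Arguments. Unset Strict Implicit. Unset Printing Implicit Defensive.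
Import Order.TTheory GRing.Theory Num.Theory.
Local Open Scope ring_scope.

(* An affine hyperplane of R^n is {x | c . x = b} with c <> 0; we encode it
   by its data (c, b). A family of hyperplanes is a finite multiset, i.e. a
   list of such data (repetitions allowed). *)
Definition hyperplane (n : nat) : Type := ('rV[R]_n * R)%type.

Definition is_hyperplane n (h : hyperplane n) : bool := h.1 != 0.

Definition on_hyperplane n (h : hyperplane n) (x : 'rV[R]_n) : bool :=
  \sum_(i < n) h.1 0 i * x 0 i == h.2.

Definition cover_count n (F : seq (hyperplane n)) (x : 'rV[R]_n) : nat :=
  count (fun h => on_hyperplane h x) F.

(* points of the grid mB^n = {0,...,m}^n, encoded by their coordinates *)
Definition grid_point (m n : nat) (p : {ffun 'I_n -> 'I_m.+1}) : 'rV[R]_n :=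
  \row_(i < n) ((p i : nat)%:R : R).

Definition admissible (m n k : nat) (a : {ffun 'I_n -> 'I_m.+1})
    (F : seq (hyperplane n)) : Prop :=
  all (@is_hyperplane n) F /\
  (forall p : {ffun 'I_n -> 'I_m.+1}, p != a ->
     leq k (cover_count F (grid_point p))) /\
  cover_count F (grid_point a) = 0%N.

Definition f_value_is (m n k : nat) (a : {ffun 'I_n -> 'I_m.+1}) (v : nat)
    : Prop :=
  (exists F, admissible k a F /\ size F = v) /\
  (forall F, admissible k a F -> leq v (size F)).

(* Upper bound: the m n hyperplanes x_i = v with v <> a_i cover twice every
   grid point that differs from a in two coordinates.  For r < m let a_k + d_k
   be the r-th element of {0, ..., m} \ {a_k}; the hyperplane
   sum_k (x_k - a_k) / d_k = 1 misses a and contains every point differing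
   from a in a single coordinate i with x_i = a_i + d_i.  These m hyperplanes
   supply the second covering of the points differing from a in one coordinate.

   Lower bound: fix a coordinate i0 and let P(x) be the product of the affine
   forms of the family.  Take the m-th finite difference of P at 0 in every
   coordinate except i0, keeping x_i0 = t free.  This operator kills all
   monomials of degree < m (n - 1), so the resulting polynomial g(t) has degree
   at most |F| - m (n - 1).  Every grid value t <> a_i0 is a double root of g,
   since each point of that slice is covered twice, whereas g(a_i0) <> 0, since
   on that slice only the term at the uncovered point a survives.  Hence
   2 m <= |F| - m (n - 1). *)

(* Imported before MathComp so that the [%N] and [%R] delimiters are MathComp's. *)
From Stdlib Require Import Rdefinitions.
From mathcomp Require Import all_boot all_order all_algebra zify ring.
From mathcomp Require Import Rstruct.
Set Implicit Arguments. Unset Strict Implicit. Unset Printing Implicit Defensive.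
Import Order.TTheory GRing.Theory Num.Theory.
Local Open Scope ring_scope.

Section AltBinomialMoment.
Variable R : pzRingType.

Definition alt_binomial_moment (m b : nat) : R :=
  \sum_(j < m.+1) (-1) ^+ j * 'C(m, j)%:R * j%:R ^+ b.

Lemma alt_binomial_momentS m b :
  alt_binomial_moment m.+1 b = alt_binomial_moment m b -
    \sum_(k < b.+1) 'C(b, k)%:R * alt_binomial_moment m k.
Proof.
have -> : \sum_(k < b.+1) 'C(b, k)%:R * alt_binomial_moment m k =
    \sum_(j < m.+1) (-1) ^+ j * 'C(m, j)%:R * j.+1%:R ^+ b.
  rewrite /alt_binomial_moment.
  under [RHS]eq_bigr => j _ do
    rewrite -[(nat_of_ord j).+1]add1n natrD addrC exprD1n mulr_sumr.
  rewrite [RHS]exchange_big /=; apply: eq_bigr => k _.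
  rewrite mulr_sumr; apply: eq_bigr => j _.
  by rewrite [RHS]mulrnAr -[RHS]mulr_natr [RHS]commr_nat.
have -> : alt_binomial_moment m b =
    \sum_(j < m.+2) (-1) ^+ j * 'C(m, j)%:R * j%:R ^+ b.
  by rewrite [RHS]big_ord_recr /= bin_small // mulr0 mul0r addr0.
rewrite /alt_binomial_moment big_ord_recl [X in _ = X - _]big_ord_recl /=.
rewrite !bin0 -addrA; congr (_ + _); rewrite -sumrB; apply: eq_bigr => j _.
by rewrite /bump /= add1n binS natrD exprS mulrDr mulrDl !mulN1r !mulNr.
Qed.

Lemma alt_binomial_moment_eq0 m b : (b < m)%N -> alt_binomial_moment m b = 0.
Proof.
elim: m b => [//|m IHm] b ltbm.
rewrite alt_binomial_momentS big_ord_recr /= binn mul1r.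
rewrite opprD addrCA subrr addr0.
rewrite big1 ?oppr0 // => k _; rewrite IHm ?mulr0 //.
exact: leq_trans (ltn_ord k) ltbm.
Qed.
End AltBinomialMoment.

Lemma exp_XsubC_dvdp_prod (R : idomainType) (s : seq {poly R}) (x : R) k :
  (k <= count (root^~ x) s)%N -> ('X - x%:P) ^+ k %| \prod_(p <- s) p.
Proof.
elim: s k => [|p s IHs] k /=; first by rewrite leqn0 => /eqP ->; rewrite dvd1p.
rewrite big_cons; case: (boolP (root p x)) => [px|_] /= lek; last first.
  exact/dvdp_mull/IHs.
case: k lek => [|k] lek; first by rewrite dvd1p.
by rewrite exprS dvdp_mul // -?root_factor_theorem // IHs.
Qed.

Lemma double_roots_size_gt (R : fieldType) (g : {poly R}) (s : seq R) :
  g != 0 -> uniq s -> {in s, forall x, ('X - x%:P) ^+ 2 %| g} ->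
  (2 * size s < size g)%N.
Proof.
move=> g_neq0 s_uniq s_sq.
suff /(dvdp_leq g_neq0) : \prod_(x <- s) ('X - x%:P) ^+ 2 %| g.
  by rewrite big_split /= -big_cat size_prod_XsubC size_cat addnn mul2n.
elim: s s_uniq s_sq => [|x s IHs] /=; first by rewrite big_nil dvd1p.
case/andP=> xNs s_uniq s_sq; rewrite big_cons Gauss_dvdp.
  by rewrite s_sq ?mem_head // IHs // => y ys; rewrite s_sq // inE ys orbT.
rewrite coprimep_expl // coprimep_sym coprimep_XsubC /root horner_prod.
rewrite prodf_seq_neq0; apply/allP => y ys /=.
rewrite horner_exp hornerXsubC expf_neq0 // subr_eq0.
by apply: contraNneq xNs => ->.
Qed.

Section Grid.
Variables m n : nat.
Local Notation point := {ffun 'I_n -> 'I_m.+1}.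

Definition grid_coord (q : point) (i : 'I_n) : R := (q i : nat)%:R.

(* A body checked against the type [R] is parsed in Stdlib's [R_scope], whose
   [+], [-] and [*] are not MathComp's; hence result types are inferred below. *)

Definition monomial (be : 'I_n -> nat) (q : point) :=
  \prod_i grid_coord q i ^+ be i.

Definition affine_value (h : hyperplane n) (q : point) :=
  \sum_i h.1 0 i * grid_coord q i - h.2.

Definition set_coord (q : point) (i : 'I_n) (j : 'I_m.+1) : point :=
  [ffun k => if k == i then j else q k].

Lemma on_hyperplane_grid (h : hyperplane n) (p : point) :
  on_hyperplane h (grid_point p) = (affine_value h p == 0).
Proof.
rewrite /on_hyperplane /grid_point subr_eq0.
by under eq_bigr do rewrite mxE.
Qed.

Lemma monomial0 (q : point) : monomial (fun=> 0%N) q = 1.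
Proof. exact: big1. Qed.

Lemma monomialS (be : 'I_n -> nat) (i : 'I_n) (q : point) :
  monomial (fun k => (be k + (k == i))%N) q = monomial be q * grid_coord q i.
Proof.
rewrite /monomial; under eq_bigr do rewrite exprD.
rewrite big_split /=; congr (_ * _).
rewrite (bigD1 i) //= eqxx expr1 big1 ?mulr1 // => k /negbTE ->.
exact: expr0.
Qed.

Section WeightedProduct.
Variables (W : point -> R) (M : nat).
Hypothesis W_monomial : forall be : 'I_n -> nat, (\sum_i be i < M)%N ->
  \sum_q W q * monomial be q = 0.
Variable slope : hyperplane n -> R.

(* The image of [x |-> x ^ be * \prod_h (slope h * t + affine_value h x)] under
   the functional [f |-> \sum_q W q * f q]. *)
Definition weighted_prod (F : seq (hyperplane n)) (be : 'I_n -> nat)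
  : {poly R} :=
  \sum_q (W q * monomial be q) *:
    \prod_(h <- F) ('X * (slope h)%:P + (affine_value h q)%:P).

Lemma coef_weighted_prod (F : seq (hyperplane n)) (be : 'I_n -> nat) (e : nat) :
  (size F + \sum_i be i < e + M)%N -> (weighted_prod F be)`_e = 0.
Proof.
(* A new factor either shifts the power of t or multiplies by one coordinate
   of x, i.e. raises [be]. *)
elim: F be e => [|h F IHF] be e ltFM.
  rewrite coef_sum; under eq_bigr do rewrite big_nil coefZ coef1.
  case: e ltFM => [|e] ltFM; last by rewrite big1 // => q _; rewrite mulr0.
  by under eq_bigr do rewrite mulr1; apply: W_monomial.
have coef_step (P : {poly R}) q k :
    (('X * (slope h)%:P + (affine_value h q)%:P) * P)`_k =
    slope h * (if k is k'.+1 then P`_k' else 0) + affine_value h q * P`_k.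
  rewrite mulrDl coefD -mulrA coefXM !coefCM.
  by case: k => [|k] //=; rewrite mulr0.
rewrite coef_sum; under eq_bigr do rewrite coefZ big_cons coef_step mulrDr.
rewrite big_split /=.
have -> : \sum_q W q * monomial be q *
    (slope h * (if e is e'.+1 then (\prod_(h <- F)
       ('X * (slope h)%:P + (affine_value h q)%:P))`_e' else 0)) = 0.
  case: e ltFM => [|e] ltFM; first by rewrite big1 // => q _; rewrite !mulr0.
  transitivity (slope h * (weighted_prod F be)`_e).
    rewrite coef_sum mulr_sumr; apply: eq_bigr => q _.
    by rewrite coefZ mulrCA.
  by rewrite IHF ?mulr0 //; move: ltFM => /=; lia.
rewrite add0r.
transitivity (\sum_i h.1 0 i * (weighted_prod F (fun k => (be k + (k == i))%N))`_e
    - h.2 * (weighted_prod F be)`_e).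
  under eq_bigr => q _ do
    rewrite [affine_value h q]/affine_value mulrBl mulr_suml mulrBr mulr_sumr.
  rewrite sumrB exchange_big /=; congr (_ - _).
    apply: eq_bigr => i _; rewrite coef_sum mulr_sumr; apply: eq_bigr => q _.
    by rewrite coefZ monomialS; ring.
  rewrite coef_sum mulr_sumr; apply: eq_bigr => q _.
  by rewrite coefZ mulrCA.
rewrite IHF ?mulr0 ?subr0; last by move: ltFM => /=; lia.
rewrite big1 // => i _; rewrite IHF ?mulr0 //.
have -> : (\sum_k (be k + (k == i)) = (\sum_k be k).+1)%N.
  rewrite big_split /= -addn1; congr (_ + _).
  by rewrite (bigD1 i) //= eqxx big1 // => k /negbTE ->.
by move: ltFM => /=; lia.
Qed.
End WeightedProduct.
End Grid.

Section DifferenceWeight.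
Variables (m n : nat) (i0 : 'I_n).
Local Notation point := {ffun 'I_n -> 'I_m.+1}.

(* [diff_weight] is the m-th finite difference at 0 in every coordinate but i0
   (up to sign) and evaluation at 0 in coordinate i0. *)
Definition coord_weight (i : 'I_n) (j : nat) :=
  if i == i0 then (j == 0%N)%:R else (-1) ^+ j * ('C(m, j)%:R : R).

Definition diff_weight (q : point) := \prod_i coord_weight i (q i).

Lemma diff_weight_monomial (be : 'I_n -> nat) :
  (\sum_i be i < m * n.-1)%N -> \sum_q diff_weight q * monomial be q = 0.
Proof.
move=> small_be.
have -> : \sum_q diff_weight q * monomial be q =
    \prod_i \sum_(j < m.+1) coord_weight i j * (j%:R) ^+ be i.
  by rewrite bigA_distr_bigA; apply: eq_bigr => q _; rewrite -big_split.
have [be_i0_eq0|be_i0_pos] := posnP (be i0); last first.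
  rewrite (bigD1 i0) //= big_ord_recl /coord_weight eqxx /=.
  rewrite expr0n (gtn_eqF be_i0_pos) mulr0 add0r big1 ?mul0r // => j _.
  exact: mul0r.
have [i /andP[i_neq0 be_i_small]|be_large] :=
  pickP (fun i => (i != i0) && (be i < m)%N).
  rewrite (bigD1 i) //=.
  have -> : \sum_(j < m.+1) coord_weight i j * j%:R ^+ be i =
      alt_binomial_moment R m (be i).
    by apply: eq_bigr => j _; rewrite /coord_weight (negbTE i_neq0).
  by rewrite alt_binomial_moment_eq0 // mul0r.
suff : (m * n.-1 <= \sum_i be i)%N by rewrite leqNgt small_be.
rewrite (bigD1 i0) //= be_i0_eq0 add0n.
apply: (@leq_trans (\sum_(i | i != i0) m)%N).
  by rewrite sum_nat_const cardC1 card_ord mulnC.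
apply: leq_sum => i i_neq0; move: (be_large i).
by rewrite i_neq0 /= => /negbT; rewrite -leqNgt.
Qed.

Lemma diff_weight_eq0 (q : point) : (q i0 : nat) != 0%N -> diff_weight q = 0.
Proof.
move=> qi0; rewrite /diff_weight (bigD1 i0) //= /coord_weight eqxx.
by rewrite (negbTE qi0) mul0r.
Qed.

Lemma diff_weight_neq0 (q : point) : (q i0 : nat) = 0%N -> diff_weight q != 0.
Proof.
move=> qi0; apply/prodf_neq0 => i _; rewrite /coord_weight.
have [->|i_neq0] := eqVneq i i0; first by rewrite qi0 oner_eq0.
rewrite mulf_neq0 ?expf_neq0 ?oppr_eq0 ?oner_eq0 // pnatr_eq0 -lt0n bin_gt0.
by rewrite -ltnS.
Qed.
End DifferenceWeight.

Section LowerBound.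
Variables (m n : nat) (i0 : 'I_n).
Local Notation point := {ffun 'I_n -> 'I_m.+1}.

Lemma horner_affine_slice (h : hyperplane n) (q : point) (j : 'I_m.+1) :
  (q i0 : nat) = 0%N ->
  ('X * (h.1 0 i0)%:P + (affine_value h q)%:P).[(j : nat)%:R] =
    affine_value h (set_coord q i0 j).
Proof.
move=> qi0; rewrite !hornerE /affine_value (bigD1 i0) //=.
rewrite [in RHS](bigD1 i0) //= /grid_coord !ffunE eqxx qi0 mulr0 add0r.
rewrite [_ * h.1 0 i0]mulrC; congr (_ + _ + _); apply: eq_bigr => i.
by rewrite ffunE => /negbTE ->.
Qed.

Variable F : seq (hyperplane n).

Definition slice_poly : {poly R} :=
  weighted_prod (@diff_weight m n i0) (fun h => h.1 0 i0) F (fun=> 0%N).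

Lemma size_slice_poly : (size slice_poly <= size F + 1 - m * n.-1)%N.
Proof.
apply/leq_sizeP => e le_e; apply: coef_weighted_prod.
- exact: diff_weight_monomial.
- by rewrite big1 // addn0; lia.
Qed.

Variable a : point.
Hypothesis F_adm : admissible 2 a F.

Lemma slice_poly_double_root (j : 'I_m.+1) :
  j != a i0 -> ('X - ((j : nat)%:R)%:P) ^+ 2 %| slice_poly.
Proof.
move=> j_neq; apply: (big_ind (fun p => ('X - ((j : nat)%:R)%:P) ^+ 2 %| p)).
- exact: dvdp0.
- exact: dvdp_add.
move=> q _; have [qi0|qi0] := eqVneq (q i0 : nat) 0%N; last first.
  by rewrite diff_weight_eq0 // mul0r scale0r dvdp0.
rewrite -mul_polyC dvdp_mull // -[\prod_(_ <- _) _](big_map _ xpredT id).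
apply: exp_XsubC_dvdp_prod; rewrite count_map.
have p_neq_a : set_coord q i0 j != a.
  by apply: contra j_neq => /eqP <-; rewrite ffunE eqxx.
apply: leq_trans (F_adm.2.1 _ p_neq_a) _; apply: sub_count => h /=.
by rewrite /root horner_affine_slice // on_hyperplane_grid.
Qed.

Lemma slice_poly_neq0_at_a : slice_poly.[(a i0 : nat)%:R] != 0.
Proof.
pose qa := set_coord a i0 ord0.
have qa_i0 : (qa i0 : nat) = 0%N by rewrite ffunE eqxx.
rewrite /slice_poly /weighted_prod horner_sum (bigD1 qa) //=.
rewrite [X in _ + X]big1 ?addr0 => [|q q_neq].
  rewrite hornerZ monomial0 mulr1 mulf_neq0 ?diff_weight_neq0 //.
  rewrite horner_prod prodf_seq_neq0; apply/allP => h hF /=.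
  rewrite horner_affine_slice //.
  have -> : set_coord qa i0 (a i0) = a.
    by apply/ffunP => i; rewrite !ffunE; case: eqP => [->|].
  rewrite -on_hyperplane_grid; apply: contraTN isT => a_on_h.
  have := F_adm.2.2; rewrite /cover_count => /eqP.
  by rewrite -leqn0 leqNgt -has_count; case/hasP; exists h.
have [qi0|qi0] := eqVneq (q i0 : nat) 0%N; last first.
  by rewrite hornerZ diff_weight_eq0 // !mul0r.
rewrite hornerZ horner_prod; apply/eqP.
rewrite mulf_eq0 prodf_seq_eq0; apply/orP; right.
have p_neq_a : set_coord q i0 (a i0) != a.
  apply: contra q_neq => /eqP p_eq_a; apply/eqP/ffunP => i.
  rewrite ffunE; case: eqP => [->|/eqP i_neq]; first exact: val_inj.
  by move/ffunP: p_eq_a => /(_ i); rewrite ffunE (negbTE i_neq) => <-.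
have := F_adm.2.1 _ p_neq_a; rewrite /cover_count => /ltnW.
rewrite -has_count => /hasP[h hF h_on]; apply/hasP; exists h => //=.
by rewrite horner_affine_slice // -on_hyperplane_grid.
Qed.

Lemma admissible2_size_ge : (m * n + m <= size F)%N.
Proof.
have poly_neq0 : slice_poly != 0.
  by apply: contraNneq slice_poly_neq0_at_a => ->; rewrite horner0.
pose s : seq R := [seq (j : nat)%:R | j : 'I_m.+1 <- enum (predC1 (a i0))].
have s_uniq : uniq s.
  rewrite map_inj_uniq ?enum_uniq // => x y /eqP; rewrite eqr_nat => /eqP.
  exact: val_inj.
have s_roots : {in s, forall x, ('X - x%:P) ^+ 2 %| slice_poly}.
  by move=> x /mapP[j]; rewrite mem_enum => j_neq ->; apply: slice_poly_double_root.
have := leq_trans (double_roots_size_gt poly_neq0 s_uniq s_roots) size_slice_poly.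
rewrite size_map -cardE cardC1 card_ord /=.
have n_pos : (0 < n)%N by case: (n) i0 => [[]|].
have -> : (m * n = m * n.-1 + m)%N by rewrite -mulnSr prednK.
move: (m * n.-1)%N => M; lia.
Qed.
End LowerBound.

Section Construction.
Variables (m n : nat) (a : {ffun 'I_n -> 'I_m.+1}).
Local Notation point := {ffun 'I_n -> 'I_m.+1}.

Definition coord_hyperplane (i : 'I_n) (v : R) : hyperplane n :=
  (\row_k (k == i)%:R, v).

Definition axis_family : seq (hyperplane n) :=
  [seq coord_hyperplane i (bump (a i) j)%:R | i <- enum 'I_n, j <- iota 0 m].

Definition diagonal_hyperplane (r : nat) : hyperplane n :=
  let c : 'rV[R]_n := \row_k (((bump (a k) r)%:R - (a k : nat)%:R)^-1) in
  let b := 1 + \sum_k c 0 k * (a k : nat)%:R in (c, b).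

Definition diagonal_family : seq (hyperplane n) :=
  [seq diagonal_hyperplane r | r <- iota 0 m].

Definition witness_family : seq (hyperplane n) := axis_family ++ diagonal_family.

Lemma size_witness_family : size witness_family = (m * n + m)%N.
Proof.
by rewrite size_cat size_allpairs size_enum_ord !size_map size_iota mulnC.
Qed.

Lemma on_coord_hyperplane (i : 'I_n) (v : R) (p : point) :
  on_hyperplane (coord_hyperplane i v) (grid_point p) = (grid_coord p i == v).
Proof.
rewrite on_hyperplane_grid /affine_value subr_eq0 (bigD1 i) //= mxE eqxx mul1r.
by rewrite big1 ?addr0 // => k /negbTE k_neq; rewrite mxE k_neq mul0r.
Qed.

Lemma affine_value_diagonal (r : nat) (p : point) :
  affine_value (diagonal_hyperplane r) p =
    \sum_k (grid_coord p k - (a k : nat)%:R) / ((bump (a k) r)%:R - (a k : nat)%:R) - 1.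
Proof.
rewrite /affine_value /=; set c := \row_k _.
rewrite [in RHS](eq_bigr (fun k => c 0 k * grid_coord p k - c 0 k * (a k : nat)%:R)).
  by rewrite sumrB; ring.
by move=> k _; rewrite /c mxE; ring.
Qed.

Lemma unbump_lt (x y : 'I_m.+1) : x != y -> (unbump y x < m)%N.
Proof.
move=> x_neq; have : (x : nat) != y by [].
rewrite /unbump; move: (ltn_ord x) (ltn_ord y); lia.
Qed.

Lemma axis_family_count (p : point) :
  (#|[pred i | p i != a i]| <= cover_count axis_family (grid_point p))%N.
Proof.
rewrite /cover_count count_flatten -sum1_card big_mkcond /= sumnE.
rewrite -map_comp big_map big_enum /=; apply: leq_sum => i _.
case: ifP => // p_neq; rewrite -has_count; apply/hasP.
exists (coord_hyperplane i (bump (a i) (unbump (a i) (p i)))%:R).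
  by apply: map_f; rewrite mem_iota unbump_lt.
by rewrite on_coord_hyperplane unbumpK // inE; apply: contraNneq p_neq => /val_inj.
Qed.

Lemma diagonal_family_cover (p : point) (i : 'I_n) :
  p i != a i -> (forall k, k != i -> p k = a k) ->
  has (fun h => on_hyperplane h (grid_point p)) diagonal_family.
Proof.
move=> p_neq p_eq; rewrite has_map; apply/hasP.
exists (unbump (a i) (p i)); first by rewrite mem_iota unbump_lt.
rewrite /= on_hyperplane_grid affine_value_diagonal subr_eq0 (bigD1 i) //=.
rewrite big1 ?addr0 => [|k /p_eq]; last by rewrite /grid_coord => ->; rewrite subrr mul0r.
by rewrite unbumpK ?inE // divff // subr_eq0 eqr_nat.
Qed.

Lemma witness_family_hyperplanes : (0 < n)%N -> all (@is_hyperplane n) witness_family.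
Proof.
move=> n_pos; rewrite all_cat; apply/andP; split; apply/allP => h.
  case/allpairsP => -[i j] [_ _ ->]; apply/eqP => /rowP /(_ i).
  by rewrite !mxE eqxx; apply/eqP/oner_neq0.
case/mapP => r _ ->; apply/eqP => /rowP /(_ (Ordinal n_pos)); rewrite !mxE.
by apply/eqP; rewrite invr_eq0 subr_eq0 eqr_nat eq_sym neq_bump.
Qed.

Lemma witness_family_avoids : cover_count witness_family (grid_point a) = 0%N.
Proof.
apply/eqP; rewrite /cover_count count_cat addn_eq0 !eqn0Ngt -!has_count.
apply/andP; split; apply/hasPn => h.
  case/allpairsP => -[i j] [_ _ ->].
  by rewrite on_coord_hyperplane /grid_coord eqr_nat neq_bump.
case/mapP => r _ ->; rewrite on_hyperplane_grid affine_value_diagonal.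
by rewrite big1 ?sub0r ?oppr_eq0 ?oner_eq0 // => k _; rewrite subrr mul0r.
Qed.

Lemma witness_family_covers (p : point) :
  p != a -> (2 <= cover_count witness_family (grid_point p))%N.
Proof.
move=> p_neq_a; rewrite /cover_count count_cat.
have [i p_neq] : exists i, p i != a i.
  apply/existsP; apply: contraNT p_neq_a => /existsPn p_eq.
  by apply/eqP/ffunP => k; apply/eqP/negPn.
have axis_cover := axis_family_count p.
have [|/card_le1P one_diff] := ltnP 1 #|[pred k | p k != a k]|.
  by move=> /leq_trans /(_ axis_cover) /leq_trans; apply; rewrite leq_addr.
have p_eq k : k != i -> p k = a k.
  move=> k_neq; have := one_diff i p_neq k.
  by rewrite !inE (negbTE k_neq) => /negbT/negPn/eqP.
have := diagonal_family_cover p_neq p_eq; rewrite has_count => diag_cover.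
have : (0 < #|[pred k | p k != a k]|)%N by apply/card_gt0P; exists i.
by move=> /leq_trans /(_ axis_cover) ?; rewrite -add1n leq_add.
Qed.

Lemma admissible_witness_family : (0 < n)%N -> admissible 2 a witness_family.
Proof.
move=> n_pos; split; [exact: witness_family_hyperplanes|split].
- exact: witness_family_covers.
- exact: witness_family_avoids.
Qed.
End Construction.

Local Close Scope ring_scope.

Theorem theorem2p2 (m n : nat) (a : {ffun 'I_n -> 'I_m.+1}) :
  (1 <= m)%N -> (2 <= n)%N -> f_value_is 2 a (m * n + m).
Proof.
move=> _ n_ge2; have n_pos : (0 < n)%N by apply: leq_trans n_ge2.
split.
  exists (witness_family a); split; first exact: admissible_witness_family.
  exact: size_witness_family.
by move=> F F_adm; apply: (admissible2_size_ge (Ordinal n_pos) F_adm).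
Qed.
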